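(* Let $d,N\in\mathbb{N}$, let $k:\mathbb{R}^d\times\mathbb{R}^d\rightarrow\mathbb{R}$ be a continuous covariance kernel, and let $\{(\bm{x}^{(n)},y^{(n)})\}_{n=1}^N\subset\mathbb{R}^d\times\mathbb{R}$ be training data. Let $\sigma_n^2>0$. Define $\bm{K}\in\mathbb{R}^{N\times N}$ by $K_{ij}=k(\bm{x}^{(i)},\bm{x}^{(j)})$, $\bm{y}=(y^{(1)},\ldots,y^{(N)})^T$, $\bm{\lambda}=(\bm{K}+\sigma_n^2\bm{I}_N)^{-1}\bm{y}$, $k_i(\bm{z})=k(\bm{x}^{(i)},\bm{z})$ for $i=1,\ldots,N$, and consider the Gaussian process posterior mean function $\mu(\bm{z})=\sum_{i=1}^N \lambda_i k_i(\bm{z})$. Let $\bm{x}\in\mathbb{R}^d$ and $\bm{b}\in\mathbb{R}^d$ with positive entries, and let $H=\{\bm{z}\in\mathbb{R}^d: |z_j-x_j|\leq b_j \text{ for all } j=1,\ldots,d\}$ be the hyperrectangle with center $\bm{x}$ and edge widths $2\bm{b}$. Assume each $k_i$ is differentiable on $H$, and for each $i\in\{1,\ldots,N\}$ and $j\in\{1,\ldots,d\}$ let $\bm{L}_{k,i}^{\partial j}=\begin{bmatrix}u_{ij}\\ \ell_{ij}\end{bmatrix}\in\mathbb{R}^2$ be a vector of partial derivative bounds, i.e. $\ell_{ij}\leq \frac{\partial}{\partial z_j}k_i(\bm{z})\leq u_{ij}$ for all $\bm{z}\in H$ (first entry an upper bound, second entry a lower bound). Define $$\bm{R}(\lambda_i)=\begin{cases}\bm{I}_2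 & \lambda_i>0,\\ \begin{bmatrix}0&1\\1&0\end{bmatrix} & \lambda_i\leq 0,\end{cases}$$ and, for each $j$, the vector $\bm{v}_j=\sum_{i=1}^N \bm{R}(\lambda_i)\lambda_i\bm{L}_{k,i}^{\partial j}\in\mathbb{R}^2$. Then $$L_{\mu}(\bm{x},\bm{b})=\sqrt{\sum_{j=1}^d \max\left\{ (v_{j,1})^2,(v_{j,2})^2 \right\}}$$ is a local Lipschitz constant of $\mu$ on $H$, i.e. $|\mu(\bm{z})-\mu(\bm{z}')|\leq L_{\mu}(\bm{x},\bm{b})\,\|\bm{z}-\bm{z}'\|$ for all $\bm{z},\bm{z}'\in H$, where $\|\cdot\|$ is the Euclidean norm.
   Context: $\bm{I}_n$ denotes the $n\times n$ identity matrix and $\|\cdot\|$ the Euclidean norm. In the paper's notation the constant is written $\sqrt{\sum_{j=1}^d \max\{ (\sum_{i=1}^N\bm{R}(\lambda_i)\lambda_i\bm{L}_{k,i}^{\partial j})^2\}}$, where the square is taken entrywise on the 2-vector and the maximum is over its two entries. *)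

From HB Require Import structures.
From mathcomp Require Import all_boot all_order all_algebra.
From mathcomp Require Import all_classical all_reals all_analysis.
Set Implicit Arguments. Unset Strict Implicit. Unset Printing Implicit Defensive.
Import Order.TTheory GRing.Theory Num.Theory.
Import numFieldNormedType.Exports.
Local Open Scope ring_scope.

Section GPDefs.
Variable R : realType.

(* Euclidean norm on R^d (row vectors); note MathComp's `|.| on matrices is the sup norm. *)
Definition eucl_norm (d : nat) (z : 'rV[R]_d) : R :=
  Num.sqrt (\sum_(j < d) (z 0 j) ^+ 2).

Definition unit_vec (d : nat) (j : 'I_d) : 'rV[R]_d := delta_mx 0 j.

Definition covariance_kernel (d : nat) (k : 'rV[R]_d -> 'rV[R]_d -> R) : Prop :=
  (forall x y, k x y = k y x) /\
  (forall (n : nat) (xs : 'I_n -> 'rV[R]_d) (c : 'I_n -> R),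
      0 <= \sum_(i < n) \sum_(j < n) c i * c j * k (xs i) (xs j)).

Definition gram (d N : nat) (k : 'rV[R]_d -> 'rV[R]_d -> R) (xs : 'I_N -> 'rV[R]_d)
  : 'M[R]_N := \matrix_(i, j) k (xs i) (xs j).

Definition gp_lambda (d N : nat) (k : 'rV[R]_d -> 'rV[R]_d -> R) (xs : 'I_N -> 'rV[R]_d)
  (y : 'cV[R]_N) (sn2 : R) : 'cV[R]_N :=
  invmx (gram k xs + sn2%:M) *m y.

Definition gp_mean (d N : nat) (k : 'rV[R]_d -> 'rV[R]_d -> R) (xs : 'I_N -> 'rV[R]_d)
  (y : 'cV[R]_N) (sn2 : R) (z : 'rV[R]_d) : R :=
  \sum_(i < N) gp_lambda k xs y sn2 i 0 * k (xs i) z.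

Definition hyperrect (d : nat) (x b : 'rV[R]_d) : set 'rV[R]_d :=
  [set z | forall j : 'I_d, `|z 0 j - x 0 j| <= b 0 j].

Definition Rmat (l : R) : 'M[R]_2 :=
  if 0 < l then 1%:M else \matrix_(i, j) (if i == j then 0 else 1).

Definition vj (N : nat) (lam : 'cV[R]_N) (Lb : 'I_N -> 'cV[R]_2) : 'cV[R]_2 :=
  \sum_(i < N) (Rmat (lam i 0) *m (lam i 0 *: Lb i)).

Definition L_mu (d N : nat) (lam : 'cV[R]_N) (Lb : 'I_N -> 'I_d -> 'cV[R]_2) : R :=
  Num.sqrt (\sum_(j < d)
     Num.max ((vj lam (fun i => Lb i j)) 0 0 ^+ 2) ((vj lam (fun i => Lb i j)) 1 0 ^+ 2)).

End GPDefs.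

From HB Require Import structures.
From mathcomp Require Import all_boot all_order all_algebra.
From mathcomp Require Import all_classical all_reals all_analysis.
From mathcomp Require Import ring lra.
Import Order.TTheory GRing.Theory Num.Theory.
Import numFieldNormedType.Exports.
Local Open Scope ring_scope.
Local Open Scope classical_set_scope.

(* By linearity, d mu / d z_j = sum_i lambda_i d k_i / d z_j, and each term
   lambda_i d k_i / d z_j lies between the two entries of R(lambda_i) lambda_i L_{k,i}^{dj}
   (R swaps the upper and the lower bound when lambda_i <= 0).  Hence on H the j-th partial
   derivative of mu lies in [v_{j,2}, v_{j,1}], so its square is at most
   max (v_{j,1}^2, v_{j,2}^2).  As H is convex, the mean value theorem on the segment
   [z', z] and Cauchy-Schwarz give |mu z - mu z'| = |grad mu (c) . (z - z')|
   <= L_mu ||z - z'||. *)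

Section CauchySchwarz.
Context {R : rcfType} {d : nat} (a w : 'I_d -> R).

Lemma sqr_sum_mul_le :
  (\sum_(j < d) a j * w j) ^+ 2 <= (\sum_(j < d) a j ^+ 2) * (\sum_(j < d) w j ^+ 2).
Proof.
have prodE (u v : 'I_d -> R) :
    (\sum_(i < d) u i) * (\sum_(j < d) v j) = \sum_(i < d) \sum_(j < d) u i * v j.
  by rewrite mulr_suml; apply: eq_bigr => i _; rewrite mulr_sumr.
have lagrange : \sum_(i < d) \sum_(j < d) (a i * w j - a j * w i) ^+ 2
    = (\sum_(j < d) a j ^+ 2) * (\sum_(j < d) w j ^+ 2)
      + (\sum_(j < d) w j ^+ 2) * (\sum_(j < d) a j ^+ 2)
      - 2 * (\sum_(j < d) a j * w j) ^+ 2.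
  rewrite expr2 !prodE mulr_sumr -!big_split -sumrB; apply: eq_bigr => i _.
  rewrite mulr_sumr -!big_split -sumrB; apply: eq_bigr => j _ /=; ring.
have : 0 <= \sum_(i < d) \sum_(j < d) (a i * w j - a j * w i) ^+ 2.
  by do 2!(apply: sumr_ge0 => ? _); exact: sqr_ge0.
rewrite lagrange; lra.
Qed.

Lemma normr_sum_mul_le :
  `|\sum_(j < d) a j * w j|
    <= Num.sqrt (\sum_(j < d) a j ^+ 2) * Num.sqrt (\sum_(j < d) w j ^+ 2).
Proof.
have sqr_sum_ge0 (u : 'I_d -> R) : 0 <= \sum_(j < d) u j ^+ 2.
  by apply: sumr_ge0 => j _; exact: sqr_ge0.
rewrite -sqrtrM // -sqrtr_sqr ler_sqrt ?sqr_sum_mul_le //.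
exact: mulr_ge0.
Qed.

End CauchySchwarz.

Section MeanValue.
Context {R : realType} {V : normedModType R} (f : V -> R).

Lemma is_derive_along_line (w p : V) (t : R) :
  derivable f (t *: w + p) w ->
  is_derive t 1 (fun s : R => f (s *: w + p)) ('D_w f (t *: w + p)).
Proof.
move=> df.
have quotientE : (fun h : R => h^-1 *: (f ((h *: 1 + t) *: w + p) - f (t *: w + p)))
    = (fun h : R => h^-1 *: (f (h *: w + (t *: w + p)) - f (t *: w + p))).
  by apply: funext => h; rewrite scaler1 scalerDl addrA.
have dg : derivable (fun s : R => f (s *: w + p)) t 1 by rewrite /derivable quotientE.
apply: DeriveDef => //.
by rewrite /derive quotientE.
Qed.

Lemma mean_value_segment (z z' : V) :
  (forall t : R, 0 <= t <= 1 -> differentiable f (t *: (z - z') + z')) ->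
  exists2 t : R, 0 <= t <= 1 & f z - f z' = 'D_(z - z') f (t *: (z - z') + z').
Proof.
move=> df; set g := fun s : R => f (s *: (z - z') + z').
have dg (t : R) : 0 <= t <= 1 -> is_derive t 1 g ('D_(z - z') f (t *: (z - z') + z')).
  by move=> t01; apply/is_derive_along_line/diff_derivable/df.
have dg_in (t : R) : t \in `]0, 1[%R -> is_derive t 1 g ('D_(z - z') f (t *: (z - z') + z')).
  by rewrite in_itv /= => /andP[/ltW t0 /ltW t1]; apply: dg; rewrite t0 t1.
have gc : {within `[0, 1], continuous g}.
  apply: continuous_in_subspaceT => t; rewrite inE /= in_itv /= => t01.
  have [dgt _] := dg t t01.
  exact/differentiable_continuous/derivable1_diffP.
have [t t01 gE] := MVT_segment ler01 dg_in gc.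
exists t; first by rewrite !(itvP t01).
by move: gE; rewrite /g scale1r scale0r add0r subrK subr0 mulr1.
Qed.

End MeanValue.

Lemma derive_row_partials (R : realType) (d : nat) (f : 'rV[R]_d -> R) (c v : 'rV[R]_d) :
  differentiable f c -> 'D_v f c = \sum_(j < d) 'D_(unit_vec R j) f c * v 0 j.
Proof.
move=> df; rewrite deriveE // {1}(row_sum_delta v) linear_sum.
by apply: eq_bigr => j _; rewrite linearZ /= mulrC deriveE.
Qed.

Lemma hyperrect_segment {R : realType} {d : nat} {x b z z' : 'rV[R]_d} {t : R} :
  hyperrect x b z -> hyperrect x b z' -> 0 <= t <= 1 ->
  hyperrect x b (t *: (z - z') + z').
Proof.
move=> hz hz' /andP[t0 t1] j; rewrite !mxE.
have -> : t * (z 0 j - z' 0 j) + z' 0 j - x 0 j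
    = t * (z 0 j - x 0 j) + (1 - t) * (z' 0 j - x 0 j) by ring.
have t1' : 0 <= 1 - t by rewrite subr_ge0.
apply: (le_trans (ler_normD _ _)).
rewrite !normrM (ger0_norm t0) (ger0_norm t1').
have := ler_wpM2l t0 (hz j); have := ler_wpM2l t1' (hz' j); lra.
Qed.

Lemma sqr_le_max_sqr (R : realDomainType) (lo hi a : R) :
  lo <= a <= hi -> a ^+ 2 <= Num.max (hi ^+ 2) (lo ^+ 2).
Proof.
move=> /andP[lo_a a_hi]; rewrite le_max.
by case: (lerP 0 a) => a0; apply/orP; [left|right]; nra.
Qed.

Lemma lipschitz_of_partial_bounds {R : realType} {d : nat} {x b : 'rV[R]_d}
    (f : 'rV[R]_d -> R) (lo hi : 'I_d -> R) :
  (forall c, hyperrect x b c -> differentiable f c) ->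
  (forall j c, hyperrect x b c -> lo j <= 'D_(unit_vec R j) f c <= hi j) ->
  forall z z', hyperrect x b z -> hyperrect x b z' ->
  `|f z - f z'|
    <= Num.sqrt (\sum_(j < d) Num.max (hi j ^+ 2) (lo j ^+ 2)) * eucl_norm (z - z').
Proof.
move=> df fbound z z' hz hz'.
have df_segment (t : R) : 0 <= t <= 1 -> differentiable f (t *: (z - z') + z').
  by move=> t01; exact/df/(hyperrect_segment hz hz' t01).
have [t t01 ->] := mean_value_segment f z z' df_segment.
rewrite derive_row_partials; last exact: df_segment.
apply: (le_trans (normr_sum_mul_le _ _)); rewrite /eucl_norm.
rewrite ler_wpM2r ?sqrtr_ge0 // ler_sqrt; last first.
  by apply: sumr_ge0 => j _; rewrite le_max sqr_ge0.
by apply: ler_sum => j _; exact/sqr_le_max_sqr/fbound/(hyperrect_segment hz hz' t01).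
Qed.

Section LinearCombination.
Context {R : realType} {V : normedModType R} {N : nat}.
Variables (c : 'I_N -> R) (g : 'I_N -> V -> R).

Let lincombE : (fun z => \sum_(i < N) c i * g i z) = \sum_(i < N) c i *: g i.
Proof. by rewrite fct_sumE. Qed.

Lemma differentiable_lincomb (z : V) : (forall i, differentiable (g i) z) ->
  differentiable (fun z => \sum_(i < N) c i * g i z) z.
Proof.
move=> dg; rewrite lincombE; apply: differentiable_sum => i.
exact: differentiableZ.
Qed.

Lemma derive_lincomb (z v : V) : (forall i, differentiable (g i) z) ->
  'D_v (fun z => \sum_(i < N) c i * g i z) z = \sum_(i < N) c i * 'D_v (g i) z.
Proof.
move=> dg; rewrite lincombE derive_sum => [|i]; last first.
  exact/derivableZ/diff_derivable.
by apply: eq_bigr => i _; rewrite deriveZ //; exact: diff_derivable.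
Qed.

End LinearCombination.

Lemma Rmat_scale_bounds {R : realType} (l a : R) (v : 'cV[R]_2) :
  v 1 0 <= a <= v 0 0 ->
  (Rmat l *m (l *: v)) 1 0 <= l * a <= (Rmat l *m (l *: v)) 0 0.
Proof.
move=> /andP[lo_a a_hi]; rewrite /Rmat.
have idx0 : ord0 = 0 :> 'I_2 by apply: val_inj.
have idx1 : lift ord0 ord0 = 1 :> 'I_2 by apply: val_inj.
case: ifP => l0; rewrite !mxE !big_ord_recl !big_ord0 !mxE /=.
all: rewrite !(mul0r, mul1r, add0r, addr0) idx0 idx1; nra.
Qed.

Lemma vj_bounds {R : realType} (N : nat) (lam : 'cV[R]_N) (Lb : 'I_N -> 'cV[R]_2)
    (a : 'I_N -> R) :
  (forall i, Lb i 1 0 <= a i <= Lb i 0 0) ->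
  vj lam Lb 1 0 <= \sum_(i < N) lam i 0 * a i <= vj lam Lb 0 0.
Proof.
move=> ha; rewrite /vj !summxE; apply/andP; split; apply: ler_sum => i _.
all: by have /andP[] := Rmat_scale_bounds (lam i 0) _ _ (ha i).
Qed.

Theorem theorem2 (R : realType) (d N : nat)
  (k : 'rV[R]_d -> 'rV[R]_d -> R)
  (hcont : continuous (fun p : 'rV[R]_d * 'rV[R]_d => k p.1 p.2))
  (hcov : covariance_kernel k)
  (xs : 'I_N -> 'rV[R]_d) (y : 'cV[R]_N) (sn2 : R) (hsn2 : 0 < sn2)
  (x b : 'rV[R]_d) (hb : forall j : 'I_d, 0 < b 0 j)
  (hdiff : forall (i : 'I_N) (z : 'rV[R]_d), hyperrect x b z ->
      differentiable (k (xs i)) z)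
  (Lb : 'I_N -> 'I_d -> 'cV[R]_2)
  (hbound : forall (i : 'I_N) (j : 'I_d) (z : 'rV[R]_d), hyperrect x b z ->
      (Lb i j) 1 0 <= 'D_(@unit_vec R d j) (k (xs i)) z <= (Lb i j) 0 0) :
  forall z z' : 'rV[R]_d, hyperrect x b z -> hyperrect x b z' ->
    `|gp_mean k xs y sn2 z - gp_mean k xs y sn2 z'|
      <= L_mu (gp_lambda k xs y sn2) Lb * eucl_norm (z - z').
Proof.
set lam := gp_lambda k xs y sn2.
apply: (lipschitz_of_partial_bounds _ (fun j => vj lam (Lb^~ j) 1 0)
                                      (fun j => vj lam (Lb^~ j) 0 0)).
  by move=> c hc; apply: differentiable_lincomb => i; exact: hdiff.
move=> j c hc; rewrite derive_lincomb => [|i]; last exact: hdiff.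
by apply: vj_bounds => i; exact: hbound.
Qed.
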